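(* Let $m$ be a positive integer and $\mathcal{U}=\{S_0,S_{2,1^0},\ldots,S_{2,1^{m-1}}\}$. Define the following vectors $(y_0,\ldots,y_m)\in\mathbb{R}^{m+1}$ (where a vector is only defined when its index range for $i$ is nonempty, and $k$ ranges over $0,\ldots,m$): $\mathbf{s}_{1,m}$: $y_0=3,y_1=6$, $y_k=\max(3k,2k+4)$ for $k\ge2$ (i.e. $(3,6,8,10,12,15,\ldots,3m)$); $\mathbf{s}_{2,m}$: $y_0=6,y_1=12,y_2=16$, $y_k=6k+3$ for $k\ge3$; $\mathbf{s}_{3,m}$: $y_0=2,y_1=4,y_2=5$, $y_k=2k$ for $k\ge3$; $\mathbf{s}_{4,m}$: $y_0=3,y_1=6,y_2=8$, $y_k=3k+1$ for $k\ge3$; $\mathbf{r}_{1,m,i}$ ($5\le i\le m-1$): $y_0=6i-15,y_1=12i-30,y_2=16i-40$, $y_k=(6i-18)k+3i$ for $3\le k\le i$, $y_k=(6i-15)k$ for $k\ge i$; $\mathbf{r}_{2,m,i}$ ($5\le i\le m-1$): $y_0=i+2$, $y_k=i(k+2)$ for $1\le k\le i$, $y_k=(i+2)k$ for $k\ge i$; $\mathbf{r}_{3,m,i}$ ($5\le i\le m-1$): $y_0=3i-9,y_1=6i-18,y_2=8i-24$, $y_k=(3i-10)k+i$ for $3\le k\le i$, $y_k=(3i-9)k$ for $k\ge i$; $\mathbf{r}_{4,m,i}$ ($5\le i\le m-1$): $y_0=2i-5,y_1=4i-10$, $y_k=(2i-6)k+i$ for $2\le k\le i$, $y_k=(2i-5)k$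 for $k\ge i$; $\mathbf{r}_{5,m,i}$ ($3\le i\le m-1$): $y_k=\max(i,k)$ for all $k$; $\mathbf{r}_{6,m,i}$ ($4\le i\le m-1$): $y_0=i+1,y_1=3i-1$, $y_k=(i-1)k+2i$ for $2\le k\le i$, $y_k=(i+1)k$ for $k\ge i$. Then all of $\mathbf{s}_{j,m}$ ($1\le j\le4$) and $\mathbf{r}_{l,m,i}$ ($1\le l\le6$, $i$ in the stated range) lie in $\operatorname{trop}(\mathcal{N}_{\mathcal{U}})$.
   Context: All graphs are finite; $\hom(H;G)$ is the number of graph homomorphisms from $H$ to $G$. $S_0$ is a single vertex; for $k\ge0$, $S_{2,1^k}$ is the tree with vertex set $\{1,\ldots,k+3\}$ and edge set $\{\{1,j\}:2\le j\le k+2\}\cup\{\{k+2,k+3\}\}$. $\mathcal{N}_{\mathcal{U}}$ is the set of vectors $(\hom(S_0;G),\hom(S_{2,1^0};G),\ldots,\hom(S_{2,1^{m-1}};G))$ over all graphs $G$; $\operatorname{trop}(\mathcal{N}_{\mathcal{U}})$ is the closure of the conical hull of the coordinatewise logarithms of the points of $\mathcal{N}_{\mathcal{U}}$ with all coordinates positive (equivalently $\lim_{\tau\to\infty}\log_\tau$ of that set). *)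

From HB Require Import structures.
From mathcomp Require Import all_boot all_order all_algebra.
From mathcomp Require Import all_classical all_reals all_analysis.
Set Implicit Arguments. Unset Strict Implicit. Unset Printing Implicit Defensive.
Import Order.TTheory GRing.Theory Num.Theory.
Import numFieldNormedType.Exports.
Local Open Scope classical_set_scope.
Local Open Scope ring_scope.

Definition simple_graph (n : nat) (e : rel 'I_n) : Prop :=
  symmetric e /\ irreflexive e.

(* Edge set of S_{2,1^k}, on vertex set {1,...,k+3} (as in the paper):
   {1,j} for 2 <= j <= k+2, and {k+2,k+3}. *)
Definition S21_edge (k a b : nat) : bool :=
  [|| (a == 1%N) && (2 <= b <= k.+2)%N,
      (b == 1%N) && (2 <= a <= k.+2)%N,
      (a == k.+2) && (b == k.+3) |
      (b == k.+2) && (a == k.+3)].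

Definition hom_S0 (n : nat) (e : rel 'I_n) : nat := #|'I_n|.

(* hom(S_{2,1^k}; G): maps f from {1..k+3} (vertex v encoded as v-1 : 'I_(k+3))
   to V(G) sending every edge to an edge. *)
Definition hom_S21 (k : nat) (n : nat) (e : rel 'I_n) : nat :=
  #|[set f : {ffun 'I_(k.+3) -> 'I_n} |
      [forall a : 'I_(k.+3), forall b : 'I_(k.+3),
         S21_edge k a.+1 b.+1 ==> e (f a) (f b)]]|.

Definition homvec (m n : nat) (e : rel 'I_n) (k : 'I_m.+1) : nat :=
  if (k == 0 :> nat) then hom_S0 e else hom_S21 k.-1 e.

Definition logN (R : realType) (m : nat) : set 'rV[R]_m.+1 :=
  [set v | exists (n : nat) (e : rel 'I_n), simple_graph e /\
     (forall k, (0 < @homvec m n e k)%N) /\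
     v = \row_(k < m.+1) ln ((@homvec m n e k)%:R : R)].

Definition conic_hull (R : realType) (p : nat) (S : set 'rV[R]_p) : set 'rV[R]_p :=
  [set v | exists (N : nat) (c : 'I_N -> R) (w : 'I_N -> 'rV[R]_p),
     (forall i, 0 <= c i) /\ (forall i, S (w i)) /\ v = \sum_(i < N) c i *: w i].

Definition tropNU (R : realType) (m : nat) : set 'rV[R]_m.+1 :=
  closure (@conic_hull R m.+1 (@logN R m)).

Definition vec_of (R : realType) (m : nat) (y : nat -> R) : 'rV[R]_m.+1 :=
  \row_(k < m.+1) y k.

Section Vectors.
Variable R : realType.
Local Notation "n %:R" := (n%:R : R).

Definition s1 (k : nat) : R :=
  if k == 0%N then 3 else if k == 1%N then 6 else Num.max (3 * k%:R) (2 * k%:R + 4).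
Definition s2 (k : nat) : R :=
  if k == 0%N then 6 else if k == 1%N then 12 else if k == 2%N then 16
  else 6 * k%:R + 3.
Definition s3 (k : nat) : R :=
  if k == 0%N then 2 else if k == 1%N then 4 else if k == 2%N then 5
  else 2 * k%:R.
Definition s4 (k : nat) : R :=
  if k == 0%N then 3 else if k == 1%N then 6 else if k == 2%N then 8
  else 3 * k%:R + 1.

Definition r1 (i k : nat) : R :=
  let x := i%:R in
  if k == 0%N then 6 * x - 15 else if k == 1%N then 12 * x - 30
  else if k == 2%N then 16 * x - 40
  else if (k <= i)%N then (6 * x - 18) * k%:R + 3 * x
  else (6 * x - 15) * k%:R.
Definition r2 (i k : nat) : R :=
  let x := i%:R in
  if k == 0%N then x + 2
  else if (k <= i)%N then x * (k%:R + 2)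
  else (x + 2) * k%:R.
Definition r3 (i k : nat) : R :=
  let x := i%:R in
  if k == 0%N then 3 * x - 9 else if k == 1%N then 6 * x - 18
  else if k == 2%N then 8 * x - 24
  else if (k <= i)%N then (3 * x - 10) * k%:R + x
  else (3 * x - 9) * k%:R.
Definition r4 (i k : nat) : R :=
  let x := i%:R in
  if k == 0%N then 2 * x - 5 else if k == 1%N then 4 * x - 10
  else if (k <= i)%N then (2 * x - 6) * k%:R + x
  else (2 * x - 5) * k%:R.
Definition r5 (i k : nat) : R := Num.max i%:R k%:R.
Definition r6 (i k : nat) : R :=
  let x := i%:R in
  if k == 0%N then x + 1 else if k == 1%N then 3 * x - 1
  else if (k <= i)%N then (x - 1) * k%:R + 2 * x
  else (x + 1) * k%:R.
End Vectors.

From HB Require Import structures.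
From mathcomp Require Import all_boot all_order all_algebra.
From mathcomp Require Import all_classical all_reals all_analysis.
From mathcomp Require Import ring lra zify.

(* Every listed vector is the coordinatewise maximum of the exponent vectors of
   a few one-parameter families of graphs [G_t], built from three operations:
   disjoint union, [t ^ c] disjoint copies, and the join of an independent set
   of [t ^ p] vertices with [t ^ r] disjoint cliques of size [t ^ q]. Since
   hom(S_{2,1^k}; G) = sum_v deg(v)^k sum_{u ~ v} deg(u), each coordinate of
   the hom vector of such a family is Theta(t ^ E_j) for an explicit integer
   E_j, and a disjoint union adds hom vectors, hence takes the maximum of the
   exponents. Dividing the logarithm of the hom vector of [G_t] by [ln t] gives
   points of the cone within [ln C / ln t] of E, so E lies in its closure. *)

Set Implicit Arguments. Unset Strict Implicit. Unset Printing Implicit Defensive.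
Import Order.TTheory GRing.Theory Num.Theory.
Import numFieldNormedType.Exports.

Lemma prod_nat_of_bool (I : finType) (b : pred I) :
  \prod_i (b i : nat) = [forall i, b i] :> nat.
Proof.
case: (boolP [forall i, b i]) => [/forallP b_all | /forallPn [i /negbTE bi]].
  by rewrite big1 // => i _; rewrite b_all.
by rewrite (bigD1 i) //= bi.
Qed.

Lemma sum_pair (I T : finType) (F : I * T -> nat) :
  \sum_x F x = \sum_i \sum_a F (i, a).
Proof. by rewrite pair_bigA; apply: eq_bigr => -[]. Qed.

Lemma sum_pair_fst_eq (I T : finType) (i : I) (F : T -> nat) :
  \sum_(x : I * T) (x.1 == i) * F x.2 = \sum_b F b.
Proof.
rewrite sum_pair (bigD1 i) //= [X in _ + X]big1 ?addn0 => [|j /negbTE ji].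
  by apply: eq_bigr => b _; rewrite eqxx mul1n.
by rewrite big1 // => b; rewrite ji.
Qed.

Section HomS21Fin.
Variables (T : finType) (e : rel T).

Definition deg (v : T) : nat := \sum_u e v u.
Definition nbr_deg_sum (v : T) : nat := \sum_u e v u * deg u.
Definition homS21_fin (k : nat) : nat := \sum_v deg v ^ k * nbr_deg_sum v.
Definition homvec_fin (j : nat) : nat := if j is k.+1 then homS21_fin k else #|T|.

End HomS21Fin.

Section HomS21Count.
Variables (n k : nat) (e : rel 'I_n).
Hypothesis e_sym : symmetric e.

Definition S21_mid : 'I_k.+3 := inord k.+1.

Lemma S21_midE : S21_mid = k.+1 :> nat.
Proof. by rewrite inordK. Qed.

Definition is_S21_hom (f : {ffun 'I_k.+3 -> 'I_n}) : bool :=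
  [forall a : 'I_k.+3, forall b : 'I_k.+3, S21_edge k a.+1 b.+1 ==> e (f a) (f b)].

(* Vertex [i] of ['I_k.+3] is vertex [i.+1] of the paper: [0] is the centre,
   [k.+1] and [k.+2] the long leg. [S21_slot v u i] is where a homomorphism
   sending the centre to [v] and [k.+1] to [u] may send [i]. *)
Definition S21_slot (v u : 'I_n) (i : 'I_k.+3) (y : 'I_n) : bool :=
  if i == 0 :> nat then y == v
  else if i == k.+1 :> nat then (y == u) && e v u
  else if i == k.+2 :> nat then e u y else e v y.

Lemma S21_edge_shift (a b : nat) : S21_edge k a.+1 b.+1 =
  [|| (a == 0) && (0 < b <= k.+1), (b == 0) && (0 < a <= k.+1),
      (a == k.+1) && (b == k.+2) | (b == k.+1) && (a == k.+2)].
Proof. by rewrite /S21_edge !eqSS. Qed.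

Lemma is_S21_homE f :
  is_S21_hom f = [forall i, S21_slot (f ord0) (f S21_mid) i (f i)].
Proof.
have ord_eq (a b : 'I_k.+3) : a = b :> nat -> a = b by move/val_inj.
apply/forallP/forallP => [hom i | slot a].
- have edge (a b : 'I_k.+3) : S21_edge k a.+1 b.+1 -> e (f a) (f b).
    by move=> ab; move/forallP/(_ b)/implyP: (hom a); apply.
  rewrite /S21_slot; case: ifP => [/eqP i0 | /eqP i0]; first by rewrite (ord_eq i ord0).
  case: ifP => [/eqP ik1 | /eqP ik1].
    rewrite (ord_eq i S21_mid) ?S21_midE // eqxx; apply: edge.
    by rewrite S21_edge_shift /= S21_midE; lia.
  case: ifP => [/eqP ik2 | /eqP ik2]; apply: edge; rewrite S21_edge_shift /= ?S21_midE.
    by lia.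
  by have := ltn_ord i; lia.
- apply/forallP => b; apply/implyP; rewrite S21_edge_shift.
  have from_centre (i : 'I_k.+3) : 0 < i <= k.+1 -> e (f ord0) (f i).
    move=> hi; have := slot i; rewrite /S21_slot ifF; last by apply/eqP; lia.
    case: ifP => [/eqP ik1 /andP [/eqP -> //] | _].
    by rewrite ifF //; apply/eqP; lia.
  have from_mid (i : 'I_k.+3) : i = k.+2 :> nat -> e (f S21_mid) (f i).
    move=> ik2; have := slot i; rewrite /S21_slot ik2 /= ifF ?eqxx //; apply/eqP; lia.
  case/or4P => /andP [/eqP ha hb].
  + by rewrite (ord_eq a ord0) //; apply: from_centre.
  + by rewrite (ord_eq b ord0) // e_sym; apply: from_centre.
  + by rewrite (ord_eq a S21_mid) ?S21_midE //; apply: from_mid; apply/eqP.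
  + by rewrite (ord_eq b S21_mid) ?S21_midE // e_sym; apply: from_mid; apply/eqP.
Qed.

Lemma S21_slots_pin v u (f : {ffun 'I_k.+3 -> 'I_n}) :
  (forall i, S21_slot v u i (f i)) -> v = f ord0 /\ u = f S21_mid.
Proof.
move=> slot; have /eqP f0 := slot ord0; have := slot S21_mid.
by rewrite /S21_slot S21_midE eqxx => /andP [/eqP fmid _].
Qed.

Lemma sum_S21_slots (f : {ffun 'I_k.+3 -> 'I_n}) :
  \sum_v \sum_u [forall i, S21_slot v u i (f i)] =
  [forall i, S21_slot (f ord0) (f S21_mid) i (f i)] :> nat.
Proof.
rewrite pair_big (bigD1 (f ord0, f S21_mid)) //= big1 ?addn0 // => -[v u] /= vu.
by case: forallP => // /S21_slots_pin [fv fu]; rewrite fv fu eqxx in vu.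
Qed.

Definition S21_slot_size (v u : 'I_n) (i : nat) : nat :=
  if i == 0 then 1 else if i == k.+1 then (e v u : nat)
  else if i == k.+2 then deg e u else deg e v.

Lemma card_S21_slot v u (i : 'I_k.+3) : \sum_y S21_slot v u i y = S21_slot_size v u i.
Proof.
rewrite /S21_slot /S21_slot_size; case: ifP => _.
  by rewrite (bigD1 v) //= eqxx big1 // => y /negbTE ->.
case: ifP => _; last by case: ifP.
by rewrite (bigD1 u) //= eqxx big1 ?addn0 // => y /negbTE ->.
Qed.

Lemma prod_card_S21_slot v u :
  \prod_i \sum_y S21_slot v u i y = deg e v ^ k * (e v u * deg e u).
Proof.
under eq_bigr do rewrite card_S21_slot.
rewrite -(big_mkord xpredT (S21_slot_size v u)) big_nat_recr //= big_nat_recr //=.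
rewrite big_ltn // (@eq_big_nat _ _ _ 1 k.+1 _ (fun=> deg e v)) => [|i /andP [i1 ik]].
  rewrite prod_nat_const_nat subn1 /S21_slot_size /= !eqxx.
  by rewrite ifF ?mulnA //; apply/eqP; lia.
by rewrite /S21_slot_size !ifF //; apply/eqP; lia.
Qed.

Lemma hom_S21E : hom_S21 k e = homS21_fin e k.
Proof.
rewrite /hom_S21 -sum1_card big_mkcond /=.
transitivity (\sum_(f : {ffun 'I_k.+3 -> 'I_n})
                \sum_v \sum_u \prod_i S21_slot v u i (f i)).
  apply: eq_bigr => f _; under eq_bigr do under eq_bigr do rewrite prod_nat_of_bool.
  rewrite sum_S21_slots -is_S21_homE.
  rewrite (_ : f \in _ = is_S21_hom f); first by case: is_S21_hom.
  by apply/idP/idP => [/set_mem | /mem_set].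
rewrite exchange_big; apply: eq_bigr => v _ /=.
rewrite exchange_big /nbr_deg_sum big_distrr; apply: eq_bigr => u _ /=.
by rewrite -(bigA_distr_bigA (fun i y => S21_slot v u i y : nat)) prod_card_S21_slot.
Qed.

End HomS21Count.

Section OrdGraph.
Variables (T : finType) (e : rel T).

Definition ord_graph : rel 'I_#|T| := fun a b => e (enum_val a) (enum_val b).

Lemma sum_enum_val (F : T -> nat) : \sum_(a < #|T|) F (enum_val a) = \sum_v F v.
Proof. by rewrite (reindex (@enum_val T _) (onW_bij _ (enum_val_bij T))). Qed.

Lemma deg_ord_graph a : deg ord_graph a = deg e (enum_val a).
Proof. exact: (sum_enum_val (fun v => e (enum_val a) v : nat)). Qed.

Lemma homS21_ord_graph k : homS21_fin ord_graph k = homS21_fin e k.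
Proof.
rewrite /homS21_fin -sum_enum_val; apply: eq_bigr => a _.
rewrite deg_ord_graph /nbr_deg_sum -sum_enum_val.
by under eq_bigr do rewrite deg_ord_graph.
Qed.

Lemma ord_graph_simple : symmetric e -> irreflexive e -> simple_graph ord_graph.
Proof. by move=> e_sym e_irr; split => [a b | a]; [apply: e_sym | apply: e_irr]. Qed.

Lemma homvec_ord_graph m (j : 'I_m.+1) :
  symmetric e -> homvec ord_graph j = homvec_fin e j.
Proof.
move=> e_sym; rewrite /homvec /homvec_fin; case: j => -[|j] //= _.
  by rewrite /hom_S0 card_ord.
by rewrite hom_S21E ?homS21_ord_graph // => a b; apply: e_sym.
Qed.

End OrdGraph.

Section DisjointUnion.
Variables (T1 T2 : finType) (e1 : rel T1) (e2 : rel T2).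

Definition sum_graph : rel (T1 + T2) := fun x y =>
  match x, y with
  | inl a, inl b => e1 a b
  | inr a, inr b => e2 a b
  | _, _ => false
  end.

Lemma sum_graph_sym : symmetric e1 -> symmetric e2 -> symmetric sum_graph.
Proof. by move=> s1 s2 [a|a] [b|b] /=. Qed.

Lemma sum_graph_irr : irreflexive e1 -> irreflexive e2 -> irreflexive sum_graph.
Proof. by move=> i1 i2 [a|a] /=. Qed.

Lemma deg_sum_graph_l a : deg sum_graph (inl a) = deg e1 a.
Proof. by rewrite /deg big_sumType /= [X in _ + X]big1 ?addn0. Qed.

Lemma deg_sum_graph_r a : deg sum_graph (inr a) = deg e2 a.
Proof. by rewrite /deg big_sumType /= big1. Qed.

Lemma homvec_sum_graph j :
  homvec_fin sum_graph j = homvec_fin e1 j + homvec_fin e2 j.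
Proof.
case: j => [|k] /=; first exact: card_sum.
rewrite /homS21_fin big_sumType /=; congr (_ + _); apply: eq_bigr => a _.
  rewrite deg_sum_graph_l /nbr_deg_sum big_sumType /= [X in _ + X]big1 ?addn0 //.
  by under eq_bigr do rewrite deg_sum_graph_l.
rewrite deg_sum_graph_r /nbr_deg_sum big_sumType /= big1 //.
by under eq_bigr do rewrite deg_sum_graph_r.
Qed.

End DisjointUnion.

Section Copies.
Variables (I T : finType) (e : rel T).

Definition copies_graph : rel (I * T) := fun x y => (x.1 == y.1) && e x.2 y.2.

Lemma copies_graph_sym : symmetric e -> symmetric copies_graph.
Proof. by move=> e_sym x y; rewrite /copies_graph eq_sym e_sym. Qed.

Lemma copies_graph_irr : irreflexive e -> irreflexive copies_graph.
Proof. by move=> e_irr x; rewrite /copies_graph e_irr andbF. Qed.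

Lemma copies_graph_indicator x y : copies_graph x y = (y.1 == x.1) * e x.2 y.2 :> nat.
Proof. by rewrite mulnb eq_sym. Qed.

Lemma deg_copies_graph x : deg copies_graph x = deg e x.2.
Proof.
rewrite /deg; under eq_bigr do rewrite copies_graph_indicator.
exact: (sum_pair_fst_eq _ (fun b => e x.2 b : nat)).
Qed.

Lemma homvec_copies_graph j : homvec_fin copies_graph j = #|I| * homvec_fin e j.
Proof.
case: j => [|k] /=; first exact: card_prod.
rewrite /homS21_fin sum_pair -sum_nat_const; apply: eq_bigr => i _.
apply: eq_bigr => a _; rewrite deg_copies_graph /nbr_deg_sum /=.
under eq_bigr do rewrite copies_graph_indicator deg_copies_graph -mulnA.
congr (_ * _); exact: (sum_pair_fst_eq _ (fun b => e a b * deg e b)).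
Qed.

End Copies.

Section JoinCliques.
Variables (P R Q : nat).

Definition join_cliques : rel ('I_P + 'I_R * 'I_Q) := fun x y =>
  match x, y with
  | inl _, inl _ => false
  | inr p, inr p' => (p.1 == p'.1) && (p.2 != p'.2)
  | _, _ => true
  end.

Lemma join_cliques_sym : symmetric join_cliques.
Proof. by move=> [a|[r q]] [b|[r' q']] //=; rewrite eq_sym [q' == q]eq_sym. Qed.

Lemma join_cliques_irr : irreflexive join_cliques.
Proof. by move=> [a|p] //=; rewrite !eqxx. Qed.

Lemma join_cliques_inr_indicator p p' :
  join_cliques (inr p) (inr p') = (p'.1 == p.1) * (p'.2 != p.2) :> nat.
Proof. by rewrite /= mulnb eq_sym [p'.2 == _]eq_sym. Qed.

Lemma sum_ord_neq (q : 'I_Q) : \sum_b (b != q : nat) = Q.-1.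
Proof.
rewrite -[Q in Q.-1]card_ord -(cardC1 q) -sum1_card [RHS]big_mkcond /=.
by apply: eq_bigr => b _; rewrite !inE; case: (b != q).
Qed.

Lemma deg_join_cliques_l a : deg join_cliques (inl a) = R * Q.
Proof.
by rewrite /deg big_sumType /= big1 // sum_nat_const card_prod !card_ord muln1.
Qed.

Lemma deg_join_cliques_r p : deg join_cliques (inr p) = P + Q.-1.
Proof.
rewrite /deg big_sumType sum_nat_const card_ord muln1 -(sum_ord_neq p.2).
congr (_ + _); under eq_bigr do rewrite join_cliques_inr_indicator.
exact: (sum_pair_fst_eq _ (fun b => b != p.2 : nat)).
Qed.

Lemma nbr_deg_sum_join_cliques_l a :
  nbr_deg_sum join_cliques (inl a) = R * Q * (P + Q.-1).
Proof.
rewrite /nbr_deg_sum big_sumType /= big1 // add0n.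
under eq_bigr do rewrite deg_join_cliques_r mul1n.
by rewrite sum_nat_const card_prod !card_ord.
Qed.

Lemma nbr_deg_sum_join_cliques_r p :
  nbr_deg_sum join_cliques (inr p) = P * (R * Q) + Q.-1 * (P + Q.-1).
Proof.
rewrite /nbr_deg_sum big_sumType /=; congr (_ + _).
  under eq_bigr do rewrite deg_join_cliques_l mul1n.
  by rewrite sum_nat_const card_ord.
under eq_bigr do rewrite join_cliques_inr_indicator deg_join_cliques_r -mulnA.
rewrite (sum_pair_fst_eq _ (fun b => (b != p.2) * (P + Q.-1))) -big_distrl /=.
by rewrite sum_ord_neq.
Qed.

Lemma homvec_join_cliques j : homvec_fin join_cliques j =
  if j is k.+1 then
    P * ((R * Q) ^ k * (R * Q * (P + Q.-1))) +
    R * Q * ((P + Q.-1) ^ k * (P * (R * Q) + Q.-1 * (P + Q.-1)))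
  else P + R * Q.
Proof.
case: j => [|k] /=; first by rewrite card_sum card_prod !card_ord.
rewrite /homS21_fin big_sumType; congr (_ + _).
  under eq_bigr do rewrite deg_join_cliques_l nbr_deg_sum_join_cliques_l.
  by rewrite sum_nat_const card_ord.
under eq_bigr do rewrite deg_join_cliques_r nbr_deg_sum_join_cliques_r.
by rewrite sum_nat_const card_prod !card_ord.
Qed.

End JoinCliques.

Definition theta_pow (f : nat -> nat) (a : nat) : Prop :=
  exists2 C, 0 < C & forall t, 2 <= t -> f t <= C * t ^ a /\ t ^ a <= C * f t.

Lemma eq_theta_pow f g a : f =1 g -> theta_pow f a -> theta_pow g a.
Proof. by move=> fg [C C0 bnd]; exists C => // t; rewrite -fg; apply: bnd. Qed.

Lemma theta_pow_expn a : theta_pow (fun t => t ^ a) a.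
Proof. by exists 1 => // t _; rewrite mul1n. Qed.

Lemma theta_powM f g a b :
  theta_pow f a -> theta_pow g b -> theta_pow (fun t => f t * g t) (a + b).
Proof.
move=> [C1 C1_gt0 bnd1] [C2 C2_gt0 bnd2].
exists (C1 * C2); first by rewrite muln_gt0 C1_gt0.
move=> t t2; have [up1 lo1] := bnd1 t t2; have [up2 lo2] := bnd2 t t2.
by rewrite expnD; split; rewrite mulnACA leq_mul.
Qed.

Lemma theta_powD f g a b :
  theta_pow f a -> theta_pow g b -> theta_pow (fun t => f t + g t) (maxn a b).
Proof.
move=> [C1 C1_gt0 bnd1] [C2 C2_gt0 bnd2].
exists (C1 + C2); first by rewrite addn_gt0 C1_gt0.
move=> t t2; have [up1 lo1] := bnd1 t t2; have [up2 lo2] := bnd2 t t2.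
have t_gt0 : 0 < t by apply: leq_trans t2.
have ta : t ^ a <= t ^ maxn a b by rewrite leq_pexp2l // leq_maxl.
have tb : t ^ b <= t ^ maxn a b by rewrite leq_pexp2l // leq_maxr.
split.
  rewrite mulnDl leq_add //; [apply: leq_trans up1 _ | apply: leq_trans up2 _];
  by rewrite leq_mul2l (ta, tb) orbT.
by case: (leqP a b) => ab; [move: lo2 | move: lo1]; rewrite mulnDl !mulnDr; lia.
Qed.

Lemma theta_powX f a k : theta_pow f a -> theta_pow (fun t => f t ^ k) (a * k).
Proof.
move=> fa; elim: k => [|k IH].
  by rewrite muln0; apply: eq_theta_pow (theta_pow_expn 0) => t.
by rewrite mulnS; apply: eq_theta_pow (theta_powM fa IH) => t; rewrite expnS.
Qed.

Lemma theta_pow_pred b : 0 < b -> theta_pow (fun t => (t ^ b).-1) b.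
Proof.
move=> b_gt0; exists 2 => // t t2.
have : 2 <= t ^ b by rewrite (leq_trans t2) // -{1}(expn1 t) leq_pexp2l // ltnW.
lia.
Qed.

(* For [b = 0] the perturbation [(t ^ b).-1 * g t] vanishes; [c <= a] keeps the
   exponent right in that case. *)
Lemma theta_powD_predM f g a b c : c <= a ->
  theta_pow f a -> theta_pow g c ->
  theta_pow (fun t => f t + (t ^ b).-1 * g t) (maxn a (b + c)).
Proof.
move=> ca fa gc; case: b => [|b].
  by rewrite (maxn_idPl ca); apply: eq_theta_pow fa => t; rewrite addn0.
exact: theta_powD fa (theta_powM (theta_pow_pred _) gc).
Qed.

Lemma theta_pow_uniform (F : nat -> nat -> nat) (E : nat -> nat) n :
  (forall j, j < n -> theta_pow (F j) (E j)) ->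
  exists2 C, 0 < C & forall t j, 2 <= t -> j < n ->
    F j t <= C * t ^ E j /\ t ^ E j <= C * F j t.
Proof.
elim: n => [_ | n IH theta_F]; first by exists 1.
have [C C_gt0 bndC] := IH (fun j jn => theta_F j (ltnW jn)).
have [D D_gt0 bndD] := theta_F n (ltnSn n).
exists (C + D) => [|t j t2]; first by rewrite addn_gt0 C_gt0.
rewrite ltnS leq_eqVlt => /orP [/eqP -> | jn].
  by have [up lo] := bndD t t2; rewrite !mulnDl; lia.
by have [up lo] := bndC t j t2 jn; rewrite !mulnDl; lia.
Qed.

Definition realizable (E : nat -> nat) : Prop :=
  exists (T : nat -> finType) (e : forall t, rel (T t)),
    [/\ forall t, symmetric (e t), forall t, irreflexive (e t) &
        forall j, theta_pow (fun t => homvec_fin (e t) j) (E j)].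

Lemma realizable_max E1 E2 :
  realizable E1 -> realizable E2 -> realizable (fun j => maxn (E1 j) (E2 j)).
Proof.
move=> [T1 [e1 [sym1 irr1 theta1]]] [T2 [e2 [sym2 irr2 theta2]]].
exists (fun t => (T1 t + T2 t)%type), (fun t => sum_graph (e1 t) (e2 t)); split.
- by move=> t; apply: sum_graph_sym.
- by move=> t; apply: sum_graph_irr.
- move=> j; apply: eq_theta_pow (theta_powD (theta1 j) (theta2 j)) => t.
  by rewrite homvec_sum_graph.
Qed.

Lemma realizable_copies c E : realizable E -> realizable (fun j => c + E j).
Proof.
move=> [T [e [e_sym e_irr theta_e]]].
exists (fun t => ('I_(t ^ c) * T t)%type).
exists (fun t => copies_graph (I := 'I_(t ^ c)) (e t)); split.
- by move=> t; apply: copies_graph_sym.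
- by move=> t; apply: copies_graph_irr.
- move=> j; apply: eq_theta_pow (theta_powM (theta_pow_expn c) (theta_e j)) => t.
  by rewrite homvec_copies_graph card_ord.
Qed.

(* The exponents of [homvec_join_cliques] at [P, R, Q = t ^ p, t ^ r, t ^ q];
   [d] is the exponent of the degree [P + Q.-1] of a clique vertex. *)
Definition join_cliques_exp (p r q j : nat) : nat :=
  let d := maxn p q in
  if j is k.+1 then
    maxn (p + ((r + q) * k + (r + q + d)))
         (r + q + (d * k + maxn (p + (r + q)) (q + d)))
  else maxn p (r + q).

Lemma join_cliques_exp0 p r k :
  join_cliques_exp p r 0 k.+1 = maxn (p + r * k.+1 + p) (r + p * k.+1 + r).
Proof. by rewrite /join_cliques_exp !mulnSr; lia. Qed.

Lemma join_cliques_exp_le p r q k : p <= q ->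
  join_cliques_exp p r q k.+1 =
  maxn (p + (r + q) * k.+1 + q) (r + q * k.+1 + maxn (p + r + q) (q + q)).
Proof. by move=> pq; rewrite /join_cliques_exp (maxn_idPr pq) !mulnSr; lia. Qed.

Lemma realizable_join_cliques p r q : realizable (join_cliques_exp p r q).
Proof.
exists (fun t => ('I_(t ^ p) + 'I_(t ^ r) * 'I_(t ^ q))%type).
exists (fun t => @join_cliques (t ^ p) (t ^ r) (t ^ q)); split => [t | t | j].
- exact: join_cliques_sym.
- exact: join_cliques_irr.
apply: eq_theta_pow => [t|]; first by rewrite homvec_join_cliques.
have Pt := theta_pow_expn p; have RQt := theta_powM (theta_pow_expn r) (theta_pow_expn q).
case: j => [|k] /=; first exact: theta_powD.
have deg_r : theta_pow (fun t => t ^ p + (t ^ q).-1) (maxn p q).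
  have := theta_powD_predM q (leq0n p) Pt (theta_pow_expn 0).
  by rewrite addn0; apply: eq_theta_pow => t; rewrite muln1.
have d_le : maxn p q <= p + (r + q) by lia.
have nbr_r := theta_powD_predM q d_le (theta_powM Pt RQt) deg_r.
exact: theta_powD (theta_powM Pt (theta_powM (theta_powX k RQt) (theta_powM RQt deg_r)))
                  (theta_powM RQt (theta_powM (theta_powX k deg_r) nbr_r)).
Qed.

Section Tropicalization.
Local Open Scope ring_scope.
Variable R : realType.

Lemma ln_ratio_dist (h t a C : nat) : (2 <= t)%N -> (0 < C)%N ->
  (h <= C * t ^ a)%N -> (t ^ a <= C * h)%N ->
  `|a%:R - ln (h%:R : R) / ln t%:R| <= ln (C%:R : R) / ln t%:R.
Proof.
move=> t2 C_gt0 up lo.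
have t_gt0 : (0 < t)%N by apply: leq_trans t2.
have h_gt0 : (0 < h)%N.
  by move: lo; rewrite lt0n; case: eqP => // ->; rewrite muln0 leqn0 expn_eq0; lia.
have lnt_gt0 : 0 < ln (t%:R : R) by rewrite ln_gt0 // ltr1n.
have ln_natM x y : (0 < x)%N -> (0 < y)%N -> ln ((x * y)%:R : R) = ln x%:R + ln y%:R.
  by move=> x0 y0; rewrite natrM lnM // posrE ltr0n.
have ln_le x y : (0 < x)%N -> (x <= y)%N -> ln (x%:R : R) <= ln y%:R.
  by move=> x0 xy; rewrite ler_ln ?posrE ?ler_nat ?ltr0n //; apply: leq_trans xy.
have ln_ta : ln ((t ^ a)%:R : R) = a%:R * ln t%:R.
  by rewrite natrX lnXn ?ltr0n // mulr_natl.
have ta_gt0 : (0 < t ^ a)%N by rewrite expn_gt0 t_gt0.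
have := ln_le _ _ h_gt0 up; have := ln_le _ _ ta_gt0 lo.
rewrite !ln_natM // ln_ta => lb ub.
rewrite ler_norml; apply/andP; split;
  by rewrite -(ler_pM2r lnt_gt0) ?mulNr mulrBl !divfK ?gt_eqF //; lra.
Qed.

Lemma ln_ratio_small (C : nat) (eps : R) : 0 < eps ->
  exists2 t, (2 <= t)%N & ln (C%:R : R) / ln t%:R < eps.
Proof.
move=> eps_gt0; have ln2_gt0 : 0 < ln (2 : R) by rewrite ln_gt0 // ltr1n.
set N := (Num.truncn (ln (C%:R : R) / (eps * ln 2))).+1.
exists (2 ^ N)%N; first by rewrite -{1}(expn1 2) leq_pexp2l.
have := truncnS_gt (ln (C%:R : R) / (eps * ln 2)).
rewrite -/N ltr_pdivrMr ?mulr_gt0 // => lnC_lt.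
by rewrite natrX lnXn // ltr_pdivrMr ?pmulrn_lgt0 // -[ln 2 *+ N]mulr_natl mulrCA.
Qed.

Lemma conic_hull_scaled_logN m n (e : rel 'I_n) (s : R) :
  simple_graph e -> (forall k : 'I_m.+1, (0 < homvec e k)%N) -> 0 <= s ->
  conic_hull (@logN R m) (s *: \row_(k < m.+1) ln ((homvec e k)%:R : R)).
Proof.
move=> e_simple hom_gt0 s_ge0.
exists 1%N, (fun=> s), (fun=> \row_(k < m.+1) ln ((homvec e k)%:R : R)).
by split=> //; split=> [_ | ]; [exists n, e | rewrite big_ord1].
Qed.

Lemma tropNU_realizable m (E : nat -> nat) (y : nat -> R) :
  realizable E -> (forall j, (j <= m)%N -> y j = (E j)%:R) -> tropNU (vec_of m y).
Proof.
move=> [T [e [e_sym e_irr theta_e]]] yE.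
have [C C_gt0 bnd] := theta_pow_uniform (n := m.+1) (fun j _ => theta_e j).
move=> B /nbhs_ballP [eps eps_gt0 epsB].
have [t t2 lnC_small] := ln_ratio_small C eps_gt0.
pose G := ord_graph (e t).
have hom_bnd (k : 'I_m.+1) :
    (homvec G k <= C * t ^ E k)%N /\ (t ^ E k <= C * homvec G k)%N.
  by rewrite homvec_ord_graph //; apply: bnd.
have lnt_gt0 : 0 < ln (t%:R : R) by rewrite ln_gt0 // ltr1n.
exists ((ln t%:R)^-1 *: \row_(k < m.+1) ln ((homvec G k)%:R : R)); split.
  apply: conic_hull_scaled_logN; last by rewrite invr_ge0 ltW.
    exact: ord_graph_simple.
  move=> k; have [_ lo] := hom_bnd k; rewrite lt0n; apply: contraTneq lo => ->.
  by rewrite muln0 -ltnNge expn_gt0 (leq_trans _ t2).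
apply: epsB; split=> // i k; rewrite (ord1 i) /ball /= !mxE yE; last by rewrite -ltnS.
have [up lo] := hom_bnd k.
by rewrite mulrC; apply: le_lt_trans lnC_small; apply: ln_ratio_dist.
Qed.

End Tropicalization.

Section Vectors.
Local Open Scope ring_scope.
Variable R : realType.

Lemma s1E j : s1 R j =
  (if j == 0 then 3 else if j == 1 then 6 else maxn (3 * j) (2 * j + 4))%N%:R.
Proof.
by rewrite /s1; case: j => [|[|j]] //=; rewrite -maxEnat natr_max natrD !natrM.
Qed.

Lemma s2E j : s2 R j =
  (if j == 0 then 6 else if j == 1 then 12 else if j == 2 then 16 else 6 * j + 3)%N%:R.
Proof. by rewrite /s2; case: j => [|[|[|j]]] //=; rewrite natrD natrM. Qed.

Lemma s3E j : s3 R j =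
  (if j == 0 then 2 else if j == 1 then 4 else if j == 2 then 5 else 2 * j)%N%:R.
Proof. by rewrite /s3; case: j => [|[|[|j]]] //=; rewrite natrM. Qed.

Lemma s4E j : s4 R j =
  (if j == 0 then 3 else if j == 1 then 6 else if j == 2 then 8 else 3 * j + 1)%N%:R.
Proof. by rewrite /s4; case: j => [|[|[|j]]] //=; rewrite natrD natrM. Qed.

(* [r1], [r3], [r4] and [r6] are read at [i = a + c], so that coefficients such
   as [6 i - 15] become natural-number expressions. *)
Lemma r1E a j : r1 R (a + 5) j =
  (if j == 0 then 6 * a + 15 else if j == 1 then 12 * a + 30
   else if j == 2 then 16 * a + 40
   else if j <= a + 5 then (6 * a + 12) * j + 3 * a + 15
   else (6 * a + 15) * j)%N%:R.
Proof. by rewrite /r1; do ![case: ifP => _]; rewrite ?(natrD, natrM); ring. Qed.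

Lemma r2E i j : r2 R i j =
  (if j == 0 then i + 2 else if j <= i then i * (j + 2) else (i + 2) * j)%N%:R.
Proof. by rewrite /r2; do ![case: ifP => _]; rewrite ?(natrD, natrM). Qed.

Lemma r3E a j : r3 R (a + 5) j =
  (if j == 0 then 3 * a + 6 else if j == 1 then 6 * a + 12
   else if j == 2 then 8 * a + 16
   else if j <= a + 5 then (3 * a + 5) * j + a + 5
   else (3 * a + 6) * j)%N%:R.
Proof. by rewrite /r3; do ![case: ifP => _]; rewrite ?(natrD, natrM); ring. Qed.

Lemma r4E a j : r4 R (a + 5) j =
  (if j == 0 then 2 * a + 5 else if j == 1 then 4 * a + 10
   else if j <= a + 5 then (2 * a + 4) * j + a + 5
   else (2 * a + 5) * j)%N%:R.
Proof. by rewrite /r4; do ![case: ifP => _]; rewrite ?(natrD, natrM); ring. Qed.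

Lemma r5E i j : r5 R i j = (maxn i j)%:R.
Proof. by rewrite -maxEnat natr_max. Qed.

Lemma r6E a j : r6 R (a + 4) j =
  (if j == 0 then a + 5 else if j == 1 then 3 * a + 11
   else if j <= a + 4 then (a + 3) * j + 2 * a + 8
   else (a + 5) * j)%N%:R.
Proof. by rewrite /r6; do ![case: ifP => _]; rewrite ?(natrD, natrM); ring. Qed.


Lemma s1_trop m : tropNU (vec_of m (s1 R)).
Proof.
apply: tropNU_realizable (realizable_max (realizable_join_cliques 0 3 0)
                                         (realizable_join_cliques 2 2 0)) _ => -[|j] _.
  by rewrite s1E /join_cliques_exp.
by rewrite s1E !join_cliques_exp0; congr _%:R; case: j => [|j] /=; lia.
Qed.

Lemma s2_trop m : tropNU (vec_of m (s2 R)).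
Proof.
apply: tropNU_realizable (realizable_max (realizable_join_cliques 0 3 3)
                                         (realizable_join_cliques 4 4 0)) _ => -[|j] _.
  by rewrite s2E /join_cliques_exp.
rewrite s2E join_cliques_exp_le // join_cliques_exp0; congr _%:R.
by case: j => [|[|j]] /=; lia.
Qed.

Lemma s3_trop m : tropNU (vec_of m (s3 R)).
Proof.
apply: tropNU_realizable (realizable_max (realizable_join_cliques 0 2 0)
   (realizable_copies 1 (realizable_join_cliques 1 1 0))) _ => -[|j] _.
  by rewrite s3E /join_cliques_exp.
by rewrite s3E !join_cliques_exp0; congr _%:R; case: j => [|[|j]] /=; lia.
Qed.

Lemma s4_trop m : tropNU (vec_of m (s4 R)).
Proof.
apply: tropNU_realizable (realizable_max (realizable_join_cliques 0 2 1)
                                         (realizable_join_cliques 2 2 0)) _ => -[|j] _.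
  by rewrite s4E /join_cliques_exp.
rewrite s4E join_cliques_exp_le // join_cliques_exp0; congr _%:R.
by case: j => [|[|j]] /=; lia.
Qed.

Lemma r1_trop m i : (5 <= i)%N -> tropNU (vec_of m (r1 R i)).
Proof.
move=> /subnK <-; move: (i - 5)%N => a.
apply: tropNU_realizable (realizable_max (realizable_join_cliques 0 (6 * a + 15) 0)
   (realizable_max (realizable_join_cliques 6 (3 * a + 3) (3 * a + 9))
                   (realizable_join_cliques (4 * a + 10) (4 * a + 10) 0))) _ => -[|j] _.
  by rewrite r1E /join_cliques_exp; congr _%:R; lia.
rewrite r1E !join_cliques_exp0 join_cliques_exp_le; last lia.
congr _%:R; case: j => [|[|j]] /=; try lia.
by case: (leqP j.+3 (a + 5)) => ja; nia.
Qed.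

Lemma r2_trop m i : (5 <= i)%N -> tropNU (vec_of m (r2 R i)).
Proof.
move=> i5; apply: tropNU_realizable (realizable_max (realizable_join_cliques 0 (i + 2) 0)
                                         (realizable_join_cliques i i 0)) _ => -[|j] _.
  by rewrite r2E /join_cliques_exp; congr _%:R; lia.
rewrite r2E !join_cliques_exp0; congr _%:R => /=.
by case: (leqP j.+1 i) => ji; nia.
Qed.

Lemma r3_trop m i : (5 <= i)%N -> tropNU (vec_of m (r3 R i)).
Proof.
move=> /subnK <-; move: (i - 5)%N => a.
apply: tropNU_realizable (realizable_max (realizable_join_cliques 0 (3 * a + 6) 0)
   (realizable_max (realizable_join_cliques 2 (2 * a + 2) (a + 3))
                   (realizable_join_cliques (2 * a + 4) (2 * a + 4) 0))) _ => -[|j] _.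
  by rewrite r3E /join_cliques_exp; congr _%:R; lia.
rewrite r3E !join_cliques_exp0 join_cliques_exp_le; last lia.
congr _%:R; case: j => [|[|j]] /=; try lia.
by case: (leqP j.+3 (a + 5)) => ja; nia.
Qed.

Lemma r4_trop m i : (5 <= i)%N -> tropNU (vec_of m (r4 R i)).
Proof.
move=> /subnK <-; move: (i - 5)%N => a.
apply: tropNU_realizable (realizable_max (realizable_join_cliques 0 (2 * a + 5) 0)
                          (realizable_join_cliques 2 (a + 1) (a + 3))) _ => -[|j] _.
  by rewrite r4E /join_cliques_exp; congr _%:R; lia.
rewrite r4E join_cliques_exp0 join_cliques_exp_le; last lia.
congr _%:R; case: j => [|j] /=; first lia.
by case: (leqP j.+2 (a + 5)) => ja; nia.
Qed.

Lemma r5_trop m i : (2 <= i)%N -> tropNU (vec_of m (r5 R i)).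
Proof.
move=> i2; apply: tropNU_realizable (realizable_max (realizable_join_cliques 0 1 0)
   (realizable_copies i (realizable_join_cliques 0 0 0))) _ => -[|j] _.
  by rewrite r5E /join_cliques_exp; congr _%:R; lia.
by rewrite r5E !join_cliques_exp0; congr _%:R; lia.
Qed.

Lemma r6_trop m i : (4 <= i)%N -> tropNU (vec_of m (r6 R i)).
Proof.
move=> /subnK <-; move: (i - 4)%N => a.
apply: tropNU_realizable (realizable_max (realizable_join_cliques 0 (a + 5) 0)
   (realizable_copies 2 (realizable_join_cliques (a + 3) (a + 3) 0))) _ => -[|j] _.
  by rewrite r6E /join_cliques_exp; congr _%:R; lia.
rewrite r6E !join_cliques_exp0; congr _%:R; case: j => [|j] /=; first lia.
by case: (leqP j.+2 (a + 4)) => ja; nia.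
Qed.

End Vectors.

Unset Implicit Arguments.
Local Open Scope ring_scope.

Theorem lemma4p4 (R : realType) (m : nat) : (0 < m)%N ->
  @tropNU R m (@vec_of R m (@s1 R)) /\
  @tropNU R m (@vec_of R m (@s2 R)) /\
  @tropNU R m (@vec_of R m (@s3 R)) /\
  @tropNU R m (@vec_of R m (@s4 R)) /\
  (forall i : nat, (5 <= i <= m - 1)%N -> @tropNU R m (@vec_of R m (@r1 R i))) /\
  (forall i : nat, (5 <= i <= m - 1)%N -> @tropNU R m (@vec_of R m (@r2 R i))) /\
  (forall i : nat, (5 <= i <= m - 1)%N -> @tropNU R m (@vec_of R m (@r3 R i))) /\
  (forall i : nat, (5 <= i <= m - 1)%N -> @tropNU R m (@vec_of R m (@r4 R i))) /\
  (forall i : nat, (3 <= i <= m - 1)%N -> @tropNU R m (@vec_of R m (@r5 R i))) /\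
  (forall i : nat, (4 <= i <= m - 1)%N -> @tropNU R m (@vec_of R m (@r6 R i))).
Proof.
move=> _; repeat split; try move=> i /andP [i_ge _].
- exact: s1_trop.
- exact: s2_trop.
- exact: s3_trop.
- exact: s4_trop.
- exact: r1_trop.
- exact: r2_trop.
- exact: r3_trop.
- exact: r4_trop.
- by apply: r5_trop; apply: ltnW.
- exact: r6_trop.
Qed.
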